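(* Let $k\ge3$ and let $F_k$ be the $k(k-1)\times k$ matrix whose rows are exactly the vectors $-e_i+e_j$ and $e_i+e_j$ for all $1\le i<j\le k$ (each appearing once; $e_i$ the standard basis vectors of $\mathbb R^k$). Let $g=F_kF_k^T-\frac43\mathbb 1$, a $k(k-1)\times k(k-1)$ matrix. Then the largest singular value of $g$ is $2(k-1)-\frac43$, and the quantum value of $g$ equals $\big(2(k-1)-\tfrac43\big)k(k-1)$ (attained).
   Context: The quantum value is the supremum of $\sum_{x_1,x_2}g_{x_1,x_2}\operatorname{tr}(\rho\,\mathcal A_1(x_1)\otimes\mathcal A_2(x_2))$ over finite-dimensional complex Hilbert spaces $\mathcal H_1,\mathcal H_2$, density operators $\rho$ on $\mathcal H_1\otimes\mathcal H_2$ and Hermitian operators $\mathcal A_i(x_i)$ on $\mathcal H_i$ with eigenvalues in $[-1,1]$. *)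

From HB Require Import structures.
From mathcomp Require Import all_boot all_order all_algebra.
Set Implicit Arguments. Unset Strict Implicit. Unset Printing Implicit Defensive.
Import Order.TTheory GRing.Theory Num.Theory.
Local Open Scope ring_scope.

Section Defs.
Variable C : numClosedFieldType.

Definition adj m n (A : 'M[C]_(m, n)) : 'M[C]_(n, m) := map_mx Num.conj A^T.

Definition hermitian n (A : 'M[C]_n) : Prop := adj A = A.

(* Kronecker (tensor) product of matrices, C^m1 (x) C^m2 ~ C^(m1*m2)
   via the mxvec_index bijection 'I_m1 * 'I_m2 -> 'I_(m1*m2). *)
Definition kron m1 n1 m2 n2 (A : 'M[C]_(m1, n1)) (B : 'M[C]_(m2, n2))
  : 'M[C]_(m1 * m2, n1 * n2) :=
  \matrix_(i, j)
    let: (i1, i2) := (mxvec_indexP i : 'I_m1 * 'I_m2) in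
    let: (j1, j2) := (mxvec_indexP j : 'I_n1 * 'I_n2) in
    A i1 j1 * B i2 j2.

Definition density n (rho : 'M[C]_n) : Prop :=
  hermitian rho /\
  (forall x : 'cV[C]_n, 0 <= (adj x *m rho *m x) 0 0) /\
  \tr rho = 1.

Definition observable n (A : 'M[C]_n) : Prop :=
  hermitian A /\ (forall a, eigenvalue A a -> -1 <= a <= 1).

Definition qbias N n1 n2 (g : 'M[C]_N) (rho : 'M[C]_(n1 * n2))
  (A1 : 'I_N -> 'M[C]_n1) (A2 : 'I_N -> 'M[C]_n2) : C :=
  \sum_(x1 < N) \sum_(x2 < N) g x1 x2 * \tr (rho *m kron (A1 x1) (A2 x2)).

Definition singular_value m n (A : 'M[C]_(m, n)) (s : C) : Prop :=
  0 <= s /\ eigenvalue (adj A *m A) (s ^+ 2).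

Definition largest_singular_value m n (A : 'M[C]_(m, n)) (s : C) : Prop :=
  singular_value A s /\ (forall t, singular_value A t -> t <= s).

(* index set of rows of F_k: triples (i, j, b) with i < j;
   b = true encodes e_i + e_j, b = false encodes -e_i + e_j *)
Definition Fidx (k : nat) : {set 'I_k * 'I_k * bool} :=
  [set p : 'I_k * 'I_k * bool | (p.1.1 < p.1.2)%N].

Definition Frow k (p : 'I_k * 'I_k * bool) (c : 'I_k) : C :=
  (if p.2 then 1 else -1) * (c == p.1.1)%:R + (c == p.1.2)%:R.

Definition Fmat k : 'M[C]_(#|Fidx k|, k) :=
  \matrix_(r, c) Frow (enum_val r) c.

Definition gmat k : 'M[C]_(#|Fidx k|) :=
  Fmat k *m (Fmat k)^T - (4 / 3 : C)%:M.

End Defs.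

From Pilot Require Import Defs.
From HB Require Import structures.
From mathcomp Require Import all_boot all_order all_algebra.
From mathcomp Require Import spectral ring.
Set Implicit Arguments. Unset Strict Implicit. Unset Printing Implicit Defensive.
Import Order.TTheory GRing.Theory Num.Theory.
Local Open Scope ring_scope.

(* Put d = 2(k-1), lam = d - 4/3 and N = k(k-1).  Every column of F_k has
   2(k-1) nonzero entries and distinct columns are orthogonal, so
   F^T F = d and P = F F^T satisfies P^2 = d P.  Hence g = P - 4/3 obeys the
   sum-of-squares identity  g^T g = lam^2 - c M^T M  with M = d - P and
   c = (d - 8/3)/d >= 0.
   - Singular values: the rows of F^T are eigenvectors of g for lam, and the
     identity bounds every eigenvalue t^2 of g^* g by lam^2.
   - Upper bound: for a state rho, <X, Y> = tr(X^* rho Y) is a positive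
     semidefinite sesquilinear form; with a_x = A1 x (x) 1 and b_y = 1 (x) A2 y
     the bias is sum g_xy <a_x, b_y>, where <a_x, a_x>, <b_y, b_y> <= 1
     because 1 - A^2 >= 0 for an observable A.  Expanding
     sum_x |lam a_x - sum_y g_xy b_y|^2 >= 0 with the identity gives
     bias <= lam N.
   - Attainment: k pairwise anticommuting real symmetric involutions gamma_c
     (sign-twisted bit flips on {0,1}^k) give observables
     A_x = 2^(-1/2) sum_c F_xc gamma_c; on the maximally entangled state
     tr(rho (A_x (x) A_y)) = (F F^T)_xy / 2, so the bias is
     tr(g F F^T) / 2 = lam N. *)

Section Adjoint.
Variable C : numClosedFieldType.

Lemma adjM m n p (A : 'M[C]_(m, n)) (B : 'M[C]_(n, p)) :
  adj (A *m B) = adj B *m adj A.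
Proof. by rewrite /adj trmx_mul map_mxM. Qed.

Lemma adjK m n (A : 'M[C]_(m, n)) : adj (adj A) = A.
Proof. by apply/matrixP => i j; rewrite !mxE conjCK. Qed.

Lemma adjD m n (A B : 'M[C]_(m, n)) : adj (A + B) = adj A + adj B.
Proof. by apply/matrixP => i j; rewrite !mxE rmorphD. Qed.

Lemma adjN m n (A : 'M[C]_(m, n)) : adj (- A) = - adj A.
Proof. by apply/matrixP => i j; rewrite !mxE rmorphN. Qed.

Lemma adjZ m n c (A : 'M[C]_(m, n)) : adj (c *: A) = c^* *: adj A.
Proof. by apply/matrixP => i j; rewrite !mxE rmorphM. Qed.

Lemma adj0 m n : adj (0 : 'M[C]_(m, n)) = 0.
Proof. by apply/matrixP => i j; rewrite !mxE rmorph0. Qed.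

Lemma adj_sum m n I (r : seq I) (P : pred I) (F : I -> 'M[C]_(m, n)) :
  adj (\sum_(i <- r | P i) F i) = \sum_(i <- r | P i) adj (F i).
Proof. exact: (big_morph _ (@adjD m n) (adj0 m n)). Qed.

Lemma adj1 n : adj (1%:M : 'M[C]_n) = 1%:M.
Proof. by apply/matrixP => i j; rewrite !mxE rmorphMn rmorph1 eq_sym. Qed.

Definition real_mx m n (A : 'M[C]_(m, n)) : Prop := map_mx Num.conj A = A.

Lemma real_mxE m n (A : 'M[C]_(m, n)) : real_mx A -> forall i j, (A i j)^* = A i j.
Proof. by move=> rA i j; rewrite -{2}rA mxE. Qed.

Lemma adj_real m n (A : 'M[C]_(m, n)) : real_mx A -> adj A = A^T.
Proof. by move=> rA; rewrite /adj -map_trmx rA. Qed.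

Lemma real_mxM m n p (A : 'M[C]_(m, n)) (B : 'M[C]_(n, p)) :
  real_mx A -> real_mx B -> real_mx (A *m B).
Proof. by rewrite /real_mx map_mxM => -> ->. Qed.

Lemma real_mxT m n (A : 'M[C]_(m, n)) : real_mx A -> real_mx A^T.
Proof. by rewrite /real_mx -map_trmx => ->. Qed.

Lemma real_mxB m n (A B : 'M[C]_(m, n)) : real_mx A -> real_mx B -> real_mx (A - B).
Proof. by rewrite /real_mx map_mxB => -> ->. Qed.

Lemma real_scalar_mx n (a : C) : a^* = a -> real_mx (a%:M : 'M_n).
Proof. by rewrite /real_mx map_scalar_mx /= => ->. Qed.

End Adjoint.

Section VectorNorms.
Variable C : numClosedFieldType.

Lemma rV_norm_ge0 n (w : 'rV[C]_n) : 0 <= (w *m adj w) 0 0.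
Proof. by rewrite mxE; apply: sumr_ge0 => j _; rewrite !mxE mul_conjC_ge0. Qed.

Lemma rV_norm_gt0 n (w : 'rV[C]_n) : w != 0 -> 0 < (w *m adj w) 0 0.
Proof.
move=> w_neq0; have [j wj] : exists j, w 0 j != 0.
  apply/existsP; apply: contraR w_neq0; rewrite negb_exists => /forallP w0.
  by apply/eqP/rowP => j; rewrite mxE; apply/eqP; move: (w0 j); rewrite negbK.
rewrite mxE (bigD1 j) //=; apply: (@lt_le_trans _ _ (w 0 j * adj w j 0)).
  by rewrite !mxE mul_conjC_gt0.
by rewrite lerDl; apply: sumr_ge0 => i _; rewrite !mxE mul_conjC_ge0.
Qed.

Lemma cV_norm_ge0 p (w : 'cV[C]_p) : 0 <= (adj w *m w) 0 0.
Proof. by rewrite mxE; apply: sumr_ge0 => j _; rewrite !mxE mulrC mul_conjC_ge0. Qed.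

End VectorNorms.

Section Kronecker.
Variable C : numClosedFieldType.

Lemma pair_mxvec_index m n (i : 'I_m) (j : 'I_n) (p : is_mxvec_index (mxvec_index i j)) :
  pair_of_mxvec_index p = (i, j).
Proof.
have [g gK _] := curry_mxvec_bij m n.
have uncurryK k (q : is_mxvec_index k) :
  uncurry (@mxvec_index m n) (pair_of_mxvec_index q) = k by case: q.
move: (uncurryK _ p); case: (pair_of_mxvec_index p) => a b /= Eab.
by have := gK (a, b) isT; have := gK (i, j) isT; rewrite /= Eab => ->.
Qed.

Lemma kronE m1 n1 m2 n2 (A : 'M[C]_(m1, n1)) (B : 'M[C]_(m2, n2)) i1 i2 j1 j2 :
  kron A B (mxvec_index i1 i2) (mxvec_index j1 j2) = A i1 j1 * B i2 j2.
Proof. by rewrite /kron mxE !pair_mxvec_index. Qed.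

Lemma mxvec_index_eq m n (i1 j1 : 'I_m) (i2 j2 : 'I_n) :
  (mxvec_index i1 i2 == mxvec_index j1 j2) = (i1 == j1) && (i2 == j2).
Proof.
have [g gK _] := curry_mxvec_bij m n.
apply/eqP/andP => [/(congr1 g) | [/eqP-> /eqP->] //].
by have := gK (i1, i2) isT; have := gK (j1, j2) isT; move=> /= -> -> [-> ->].
Qed.

Lemma sum_mxvec m n (F : 'I_(m * n) -> C) :
  \sum_(p < m * n) F p = \sum_(i < m) \sum_(j < n) F (mxvec_index i j).
Proof.
rewrite pair_big /=; have [g gK Kg] := curry_mxvec_bij m n.
rewrite (reindex (uncurry (@mxvec_index m n))) /=; last first.
  by exists g => x _; [apply: gK | apply: Kg].
by apply: eq_bigr => -[i j].
Qed.

Lemma kron_mul m1 n1 p1 m2 n2 p2 (A : 'M[C]_(m1, n1)) (B : 'M[C]_(m2, n2))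
  (A' : 'M[C]_(n1, p1)) (B' : 'M[C]_(n2, p2)) :
  kron A B *m kron A' B' = kron (A *m A') (B *m B').
Proof.
apply/matrixP => p q; case/mxvec_indexP: p => i1 i2; case/mxvec_indexP: q => j1 j2.
rewrite kronE !mxE sum_mxvec big_distrlr /=.
by apply: eq_bigr => a _; apply: eq_bigr => b _; rewrite !kronE mulrACA.
Qed.

Lemma kron1 m n : kron (1%:M : 'M[C]_m) (1%:M : 'M[C]_n) = 1%:M.
Proof.
apply/matrixP => p q; case/mxvec_indexP: p => i1 i2; case/mxvec_indexP: q => j1 j2.
rewrite kronE !mxE mxvec_index_eq.
by case: (i1 == j1); case: (i2 == j2); rewrite ?mulr1 ?mulr0 ?mul0r.
Qed.

Lemma kronBl m1 p1 m2 p2 (A B : 'M[C]_(m1, p1)) (D : 'M[C]_(m2, p2)) :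
  kron (A - B) D = kron A D - kron B D.
Proof.
apply/matrixP => p q; case/mxvec_indexP: p => i1 i2; case/mxvec_indexP: q => j1 j2.
by rewrite [RHS]mxE [X in _ = _ + X]mxE !kronE !mxE mulrBl.
Qed.

Lemma kronBr m1 p1 m2 p2 (A : 'M[C]_(m1, p1)) (B D : 'M[C]_(m2, p2)) :
  kron A (B - D) = kron A B - kron A D.
Proof.
apply/matrixP => p q; case/mxvec_indexP: p => i1 i2; case/mxvec_indexP: q => j1 j2.
by rewrite [RHS]mxE [X in _ = _ + X]mxE !kronE !mxE mulrBr.
Qed.

Lemma adj_kron m1 n1 m2 n2 (A : 'M[C]_(m1, n1)) (B : 'M[C]_(m2, n2)) :
  adj (kron A B) = kron (adj A) (adj B).
Proof.
apply/matrixP => p q; case/mxvec_indexP: p => i1 i2; case/mxvec_indexP: q => j1 j2.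
by rewrite kronE [LHS]mxE [X in X^*]mxE kronE rmorphM ![adj _ _ _]mxE ![_^T _ _]mxE.
Qed.

Lemma hermitian_kron m n (A : 'M[C]_m) (B : 'M[C]_n) :
  Defs.hermitian A -> Defs.hermitian B -> Defs.hermitian (kron A B).
Proof. by move=> hA hB; rewrite /Defs.hermitian adj_kron hA hB. Qed.

Lemma hermitian1 n : Defs.hermitian (1%:M : 'M[C]_n).
Proof. exact: adj1. Qed.

End Kronecker.

Section RhoForm.
Variable C : numClosedFieldType.
Variable n : nat.
Variable rho : 'M[C]_n.

Definition rdot (X Y : 'M[C]_n) : C := \tr (adj X *m rho *m Y).

Lemma rdotDr X Y1 Y2 : rdot X (Y1 + Y2) = rdot X Y1 + rdot X Y2.
Proof. by rewrite /rdot mulmxDr mxtraceD. Qed.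

Lemma rdotNr X Y : rdot X (- Y) = - rdot X Y.
Proof. by rewrite /rdot mulmxN raddfN. Qed.

Lemma rdotZr X c Y : rdot X (c *: Y) = c * rdot X Y.
Proof. by rewrite /rdot -scalemxAr mxtraceZ. Qed.

Lemma rdotDl X1 X2 Y : rdot (X1 + X2) Y = rdot X1 Y + rdot X2 Y.
Proof. by rewrite /rdot adjD !mulmxDl mxtraceD. Qed.

Lemma rdotNl X Y : rdot (- X) Y = - rdot X Y.
Proof. by rewrite /rdot adjN !mulNmx raddfN. Qed.

Lemma rdotZl X c Y : rdot (c *: X) Y = c^* * rdot X Y.
Proof. by rewrite /rdot adjZ -!scalemxAl mxtraceZ. Qed.

Lemma rdot_sumr I (r : seq I) (P : pred I) X (F : I -> 'M_n) :
  rdot X (\sum_(i <- r | P i) F i) = \sum_(i <- r | P i) rdot X (F i).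
Proof.
elim/big_rec2: _ => [|i y Z _ <-]; last by rewrite rdotDr.
by rewrite /rdot mulmx0 mxtrace0.
Qed.

Lemma rdot_suml I (r : seq I) (P : pred I) Y (F : I -> 'M_n) :
  rdot (\sum_(i <- r | P i) F i) Y = \sum_(i <- r | P i) rdot (F i) Y.
Proof.
elim/big_rec2: _ => [|i y Z _ <-]; last by rewrite rdotDl.
by rewrite /rdot adj0 !mul0mx mxtrace0.
Qed.

Lemma rdot_hermitian X Y : Defs.hermitian X -> rdot X Y = \tr (rho *m (Y *m X)).
Proof. by move=> hX; rewrite /rdot hX -mulmxA mxtrace_mulC mulmxA. Qed.

Hypothesis rho_psd : forall x : 'cV[C]_n, 0 <= (adj x *m rho *m x) 0 0.

(* The diagonal <X, X>_rho is the sum over the columns x of X of x^* rho x. *)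
Lemma rdot_ge0 X : 0 <= rdot X X.
Proof.
apply: sumr_ge0 => j _; have := rho_psd (col j X).
suff -> : (adj X *m rho *m X) j j = (adj (col j X) *m rho *m col j X) 0 0 by [].
rewrite !mxE; apply: eq_bigr => l _; rewrite !mxE; congr (_ * _).
by apply: eq_bigr => l' _; rewrite !mxE.
Qed.

End RhoForm.

Section GramSum.
Variable C : numClosedFieldType.
Variables (n N : nat) (rho : 'M[C]_n) (b : 'I_N -> 'M[C]_n).

Definition gram_sum (M : 'M[C]_N) : C :=
  \sum_(y < N) \sum_(y' < N) M y y' * rdot rho (b y) (b y').

Lemma gram_sumD M1 M2 : gram_sum (M1 + M2) = gram_sum M1 + gram_sum M2.
Proof.
rewrite /gram_sum -big_split; apply: eq_bigr => y _; rewrite -big_split.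
by apply: eq_bigr => y' _; rewrite mxE mulrDl.
Qed.

Lemma gram_sumZ c M : gram_sum (c *: M) = c * gram_sum M.
Proof.
rewrite /gram_sum big_distrr; apply: eq_bigr => y _; rewrite big_distrr.
by apply: eq_bigr => y' _; rewrite mxE /= mulrA.
Qed.

Lemma gram_sum1 : gram_sum 1%:M = \sum_(y < N) rdot rho (b y) (b y).
Proof.
apply: eq_bigr => y _; rewrite (bigD1 y) //= big1 ?addr0 => [|y' ne].
  by rewrite mxE eqxx mul1r.
by rewrite mxE eq_sym (negPf ne) mul0r.
Qed.

Lemma sum_rdot_comb p (R : 'M[C]_(p, N)) : real_mx R ->
  \sum_(z < p) rdot rho (\sum_(y < N) R z y *: b y) (\sum_(y < N) R z y *: b y)
  = gram_sum (R^T *m R).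
Proof.
move=> /real_mxE Rreal.
transitivity (\sum_(z < p) \sum_(y < N) \sum_(y' < N)
    R z y * R z y' * rdot rho (b y) (b y')).
  apply: eq_bigr => z _; rewrite rdot_suml; apply: eq_bigr => y _.
  rewrite rdotZl rdot_sumr big_distrr; apply: eq_bigr => y' _.
  by rewrite rdotZr Rreal; exact: mulrA.
rewrite exchange_big; apply: eq_bigr => y _; rewrite exchange_big.
apply: eq_bigr => y' _; rewrite !mxE big_distrl; apply: eq_bigr => z _.
by rewrite mxE.
Qed.

End GramSum.

Section SOSBound.
Variable C : numClosedFieldType.
Variables (n N : nat) (rho : 'M[C]_n).
Hypothesis rho_psd : forall x : 'cV[C]_n, 0 <= (adj x *m rho *m x) 0 0.
Variables (g M : 'M[C]_N) (lam c : C).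
Hypotheses (g_real : real_mx g) (M_real : real_mx M).
Hypothesis g_sos : g^T *m g = lam ^+ 2 *: 1%:M - c *: (M^T *m M).

Lemma sum_rdot_image (b : 'I_N -> 'M[C]_n) :
  \sum_(x < N) rdot rho (\sum_y g x y *: b y) (\sum_y g x y *: b y) =
  lam ^+ 2 * \sum_y rdot rho (b y) (b y)
  - c * \sum_(z < N) rdot rho (\sum_y M z y *: b y) (\sum_y M z y *: b y).
Proof.
rewrite !sum_rdot_comb // g_sos gram_sumD gram_sumZ -scaleNr gram_sumZ.
by rewrite gram_sum1 mulNr.
Qed.

Lemma sos_bias_bound (a b : 'I_N -> 'M[C]_n) :
  0 < lam -> 0 <= c ->
  (forall x, rdot rho (a x) (a x) <= 1) -> (forall y, rdot rho (b y) (b y) <= 1) ->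
  (forall x y, rdot rho (b y) (a x) = rdot rho (a x) (b y)) ->
  \sum_x \sum_y g x y * rdot rho (a x) (b y) <= lam * N%:R.
Proof.
move=> lam_gt0 c_ge0 a_le1 b_le1 ba_sym.
have lam_real : lam^* = lam by apply/conj_Creal/gtr0_real.
set S := \sum_x _; pose gb x := \sum_(y < N) g x y *: b y.
set SA := \sum_(x < N) rdot rho (a x) (a x).
set SB := \sum_(y < N) rdot rho (b y) (b y).
set QM := \sum_(z < N) rdot rho (\sum_y M z y *: b y) (\sum_y M z y *: b y).
set T := \sum_(x < N) rdot rho (lam *: a x - gb x) (lam *: a x - gb x).
have T_ge0 : 0 <= T by apply: sumr_ge0 => x _; apply: rdot_ge0.
have QM_ge0 : 0 <= QM by apply: sumr_ge0 => x _; apply: rdot_ge0.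
have bounded f : (forall x, rdot rho (f x) (f x) <= 1) ->
    \sum_(x < N) rdot rho (f x) (f x) <= N%:R.
  by move=> f_le1; rewrite -[N in N%:R]card_ord -sumr_const; apply: ler_sum.
have cross x : rdot rho (a x) (gb x) = \sum_y g x y * rdot rho (a x) (b y).
  by rewrite rdot_sumr; apply: eq_bigr => y _; rewrite rdotZr.
have crossC x : rdot rho (gb x) (a x) = \sum_y g x y * rdot rho (a x) (b y).
  by rewrite rdot_suml; apply: eq_bigr => y _; rewrite rdotZl (real_mxE g_real) ba_sym.
(* Expanding T with [sum_rdot_image] exhibits 2 lam (lam N - S) as a sum of
   nonnegative terms. *)
have ET : T = lam ^+ 2 * SA - 2 * lam * S + (lam ^+ 2 * SB - c * QM).
  rewrite -sum_rdot_image /T /SA /S !mulr_sumr -sumrN -!big_split /=.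
  apply: eq_bigr => x _.
  rewrite rdotDl rdotNl !rdotDr !rdotNr !rdotZl !rdotZr lam_real cross crossC.
  by rewrite -/(gb x); ring.
have E : 2 * lam * (lam * N%:R - S) =
    lam ^+ 2 * (N%:R - SA) + lam ^+ 2 * (N%:R - SB) + c * QM + T.
  by rewrite ET; ring.
have : 0 <= 2 * lam * (lam * N%:R - S).
  have lam_ge0 := ltW lam_gt0.
  by rewrite E !addr_ge0 ?mulr_ge0 // subr_ge0; exact: bounded.
by rewrite pmulr_rge0 ?mulr_gt0 // subr_ge0.
Qed.

End SOSBound.

(* Observables: by the spectral theorem, an observable A has 1 - A^2 = W^* W
   (its eigenvalues lie in [-1, 1]), hence norm at most 1 in any state. *)
Section Observables.
Variable C : numClosedFieldType.

Lemma observable_defect n (A : 'M[C]_n) : observable A ->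
  exists W : 'M[C]_n, 1%:M - A *m A = adj W *m W.
Proof.
move=> [hA eA].
have nA : A \is normalmx by apply/normalmxP; change (A *m adj A = adj A *m A); rewrite hA.
set P := spectralmx A; set d := spectral_diag A.
have P_unitary : P \is unitarymx := spectral_unitarymx A.
have PPadj : P *m adj P = 1%:M := unitarymxP P_unitary.
have PadjP : adj P *m P = 1%:M := mulmx1C PPadj.
have A_diag : A = adj P *m diag_mx d *m P.
  by rewrite {1}(orthomx_spectralP nA) invmx_unitary.
have d_eigen i : eigenvalue A (d 0 i).
  apply/eigenvalueP; exists (row i P).
    rewrite A_diag !mulmxA -row_mul PPadj -row_mul mul1mx -row_mul mul_diag_mx.
    by apply/rowP => j; rewrite !mxE.
  apply/eqP => /(congr1 (fun M => M *m adj P)) /=.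
  rewrite -row_mul PPadj mul0mx => /rowP/(_ i); rewrite !mxE eqxx /=.
  by move/eqP; rewrite oner_eq0.
have defect_ge0 i : 0 <= 1 - d 0 i ^+ 2.
  have /andP[lo hi] := eA _ (d_eigen i).
  have -> : 1 - d 0 i ^+ 2 = (1 - d 0 i) * (d 0 i - (-1)) by ring.
  by apply: mulr_ge0; rewrite subr_ge0.
pose s := \row_i sqrtC (1 - d 0 i ^+ 2).
exists (diag_mx s *m P).
have -> : 1%:M - A *m A = adj P *m (1%:M - diag_mx d *m diag_mx d) *m P.
  rewrite mulmxBr mulmxBl mulmx1 PadjP A_diag !mulmxA.
  by rewrite -[adj P *m diag_mx d *m P *m adj P]mulmxA PPadj mulmx1.
rewrite adjM !mulmxA; congr (_ *m _); rewrite -!mulmxA; congr (_ *m _).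
rewrite mulmx_diag /adj tr_diag_mx map_diag_mx mulmx_diag -diag_const_mx.
rewrite -raddfB /=; congr diag_mx; apply/rowP => j; rewrite !mxE.
have s_ge0 : 0 <= sqrtC (1 - d 0 j ^+ 2) by rewrite sqrtC_ge0.
by rewrite conj_Creal ?ger0_real // -[RHS]expr2 sqrtCK expr2.
Qed.

Section InState.
Variables (n : nat) (rho : 'M[C]_n).
Hypothesis rho_density : density rho.

Lemma tr_state_psd (V : 'M[C]_n) : 0 <= \tr (rho *m (adj V *m V)).
Proof.
have [_ [rho_psd _]] := rho_density.
rewrite mulmxA mxtrace_mulC mulmxA.
by have := rdot_ge0 rho_psd (adj V); rewrite /rdot adjK.
Qed.

Lemma rdot_contraction (X W : 'M[C]_n) :
  Defs.hermitian X -> 1%:M - X *m X = adj W *m W -> rdot rho X X <= 1.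
Proof.
move=> hX defect; have [_ [_ tr_rho]] := rho_density.
rewrite rdot_hermitian // -subr_ge0.
have -> : 1 - \tr (rho *m (X *m X)) = \tr (rho *m (adj W *m W)).
  by rewrite -defect mulmxBr mulmx1 raddfB /= tr_rho.
exact: tr_state_psd.
Qed.

End InState.

Section Parties.
Variables (n1 n2 : nat) (rho : 'M[C]_(n1 * n2)).
Hypothesis rho_density : density rho.

Lemma rdot_left (A : 'M[C]_n1) : observable A ->
  rdot rho (kron A 1%:M) (kron A 1%:M) <= 1.
Proof.
move=> oA; have [W defect] := observable_defect oA.
apply: (rdot_contraction rho_density (W := kron W 1%:M)).
  exact: hermitian_kron oA.1 (hermitian1 _ _).
by rewrite adj_kron adj1 !kron_mul mulmx1 -defect kronBl kron1.
Qed.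

Lemma rdot_right (B : 'M[C]_n2) : observable B ->
  rdot rho (kron 1%:M B) (kron 1%:M B) <= 1.
Proof.
move=> oB; have [W defect] := observable_defect oB.
apply: (rdot_contraction rho_density (W := kron 1%:M W)).
  exact: hermitian_kron (hermitian1 _ _) oB.1.
by rewrite adj_kron adj1 !kron_mul mulmx1 -defect kronBr kron1.
Qed.

Lemma rdot_left_right (A : 'M[C]_n1) (B : 'M[C]_n2) : Defs.hermitian A ->
  rdot rho (kron A 1%:M) (kron 1%:M B) = \tr (rho *m kron A B).
Proof.
move=> hA; rewrite rdot_hermitian; last exact: hermitian_kron hA (hermitian1 _ _).
by rewrite kron_mul mul1mx mulmx1.
Qed.

Lemma rdot_right_left (A : 'M[C]_n1) (B : 'M[C]_n2) : Defs.hermitian B ->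
  rdot rho (kron 1%:M B) (kron A 1%:M) = \tr (rho *m kron A B).
Proof.
move=> hB; rewrite rdot_hermitian; last exact: hermitian_kron (hermitian1 _ _) hB.
by rewrite kron_mul mul1mx mulmx1.
Qed.

End Parties.

End Observables.

Section ShiftedProjector.
Variable C : fieldType.
Variables (N : nat) (X : 'M[C]_N) (D : C).
Hypothesis XX : X *m X = D *: X.

Lemma complement_sq : (D%:M - X) *m (D%:M - X) = D *: (D%:M - X).
Proof.
rewrite mulmxBl !mulmxBr XX !mul_mx_scalar !mul_scalar_mx.
by apply/matrixP => i j; rewrite !mxE; case: (i == j); rewrite ?mulr1n ?mulr0n; ring.
Qed.

Lemma shift_sq (a : C) : D != 0 ->
  (X - a%:M) *m (X - a%:M) =
  (D - a) ^+ 2 *: 1%:M - ((D - 2 * a) / D) *: (D *: (D%:M - X)).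
Proof.
move=> D_neq0; rewrite mulmxBl !mulmxBr XX !mul_mx_scalar !mul_scalar_mx.
apply/matrixP => i j; rewrite !mxE.
by case: (i == j); rewrite ?mulr1n ?mulr0n; field.
Qed.

End ShiftedProjector.

Section RowSums.
Variable C : numClosedFieldType.
Variable k : nat.

(* Each index occurs in k - 1 of the pairs i < j. *)
Lemma sum_pairs (f : 'I_k -> C) :
  \sum_(q : 'I_k * 'I_k | (q.1 < q.2)%N) (f q.1 + f q.2) = (k - 1)%:R * \sum_i f i.
Proof.
rewrite big_split /=.
rewrite [X in _ + X](reindex_inj (h := fun q : 'I_k * 'I_k => (q.2, q.1))) /=; last first.
  by move=> [a b] [a' b'] /= [-> ->].
have -> : \sum_(q : 'I_k * 'I_k | (q.1 < q.2)%N) f q.1 +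
    \sum_(q : 'I_k * 'I_k | (q.2 < q.1)%N) f q.1 =
    \sum_(q : 'I_k * 'I_k | q.1 != q.2) f q.1.
  rewrite [RHS](bigID (fun q : 'I_k * 'I_k => (q.1 < q.2)%N)) /=.
  by congr (_ + _); apply: eq_bigl => -[a b] /=; rewrite -val_eqE /=; case: ltngtP.
rewrite -(pair_big_dep xpredT (fun i j => i != j) (fun i j => f i)) /=.
rewrite mulr_sumr; apply: eq_bigr => i _.
rewrite (eq_bigl (fun j => j != i)) => [|j]; last by rewrite eq_sym.
by rewrite sumr_const cardC1 card_ord subn1 mulr_natl.
Qed.

Lemma sum_Fidx (h : 'I_k * 'I_k * bool -> C) :
  \sum_(r < #|Fidx k|) h (enum_val r) =
  \sum_(q : 'I_k * 'I_k | (q.1 < q.2)%N) (h (q, true) + h (q, false)).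
Proof.
rewrite -big_enum_val /=.
rewrite (eq_bigl (fun x : 'I_k * 'I_k * bool => (x.1.1 < x.1.2)%N)) => [|x]; last first.
  by rewrite /Fidx inE.
transitivity (\sum_(q : 'I_k * 'I_k | (q.1 < q.2)%N) \sum_(b : bool) h (q, b)).
  by rewrite pair_big_dep /=; apply: eq_big => [[q b]|[q b] _] //=; rewrite andbT.
by apply: eq_bigr => q _; exact: big_bool.
Qed.

Lemma card_Fidx : (#|Fidx k|%:R : C) = (k * (k - 1))%:R.
Proof.
rewrite -[X in X%:R]card_ord -sumr_const (sum_Fidx (fun _ => (1 : C))).
by rewrite (sum_pairs (fun _ => (1 : C))) sumr_const card_ord natrM mulrC mulr_natr.
Qed.

Lemma sum_delta (i j : 'I_k) : \sum_(c < k) (c == i)%:R * (c == j)%:R = (i == j)%:R :> C.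
Proof.
rewrite (bigD1 i) //= eqxx mul1r big1 ?addr0 1?eq_sym // => c ne.
by rewrite (negPf ne) mul0r.
Qed.

End RowSums.

Section FMatrix.
Variable C : numClosedFieldType.
Variable k : nat.
Local Notation F := (Fmat C k).
Local Notation d := (2 * (k - 1)%:R : C).
Local Notation lam := (2 * (k - 1)%:R - 4 / 3 : C).
Local Notation P := (F *m F^T).
Local Notation g := (gmat C k).

Lemma FtF : F^T *m F = d%:M.
Proof.
apply/matrixP => c c'; rewrite !mxE.
transitivity (\sum_(r < #|Fidx k|) Frow C (enum_val r) c * Frow C (enum_val r) c').
  by apply: eq_bigr => r _; rewrite !mxE.
rewrite (sum_Fidx (fun p => Frow C p c * Frow C p c')).
pose f i : C := (c == i)%:R * (c' == i)%:R.
transitivity (2 * \sum_(q : 'I_k * 'I_k | (q.1 < q.2)%N) (f q.1 + f q.2)).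
  by rewrite mulr_sumr; apply: eq_bigr => q _; rewrite /Frow /f /=; ring.
rewrite sum_pairs.
have -> : \sum_i f i = (c == c')%:R.
  by rewrite -sum_delta; apply: eq_bigr => i _; rewrite /f eq_sym [(c' == i)]eq_sym.
by case: (c == c'); rewrite ?mulr1 ?mulr0 ?mulr1n ?mulr0n.
Qed.

(* Each row of F has exactly two entries +-1. *)
Lemma F_row_norm x : \sum_c F x c ^+ 2 = 2.
Proof.
have := enum_valP x; rewrite /Fidx inE.
under eq_bigr => c _ do rewrite mxE.
rewrite /Frow; case: (enum_val x) => [[i j] b] /= ij.
have s2 : (if b then 1 else -1 : C) * (if b then 1 else -1) = 1.
  by case: b; rewrite ?mulrNN mulr1.
set s : C := if b then 1 else -1 in s2 *.
transitivity (\sum_c ((s * s) * ((c == i)%:R * (c == i)%:R)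
    + (2 * s) * ((c == i)%:R * (c == j)%:R) + (c == j)%:R * (c == j)%:R)).
  by apply: eq_bigr => c _; ring.
rewrite !big_split /= -!mulr_sumr !sum_delta !eqxx.
have -> : (i == j) = false by apply/negbTE; rewrite -val_eqE /= neq_ltn ij.
by rewrite s2 mulr0 addr0 mulr1.
Qed.

Lemma F_real : real_mx F.
Proof.
apply/matrixP => r c; rewrite !mxE /Frow.
by case: (enum_val r).2; rewrite ?rmorphD ?rmorphM ?rmorphN ?rmorph1 ?rmorph_nat.
Qed.

Lemma FFt_sq : P *m P = d *: P.
Proof. by rewrite mulmxA -(mulmxA F) FtF mul_mx_scalar -scalemxAl. Qed.

Lemma FFt_sym : P^T = P.
Proof. by rewrite trmx_mul trmxK. Qed.

Lemma g_real : real_mx g.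
Proof.
apply: real_mxB (real_mxM F_real (real_mxT F_real)) _.
by apply: real_scalar_mx; rewrite fmorph_div !rmorph_nat.
Qed.

Lemma g_sym : g^T = g.
Proof. by rewrite /gmat linearB /= FFt_sym tr_scalar_mx. Qed.

Lemma adj_g : adj g = g.
Proof. by rewrite adj_real ?g_sym //; exact: g_real. Qed.

Definition Fcompl : 'M[C]_#|Fidx k| := d%:M - P.

Lemma Fcompl_sym : Fcompl^T = Fcompl.
Proof. by rewrite /Fcompl linearB /= FFt_sym tr_scalar_mx. Qed.

Lemma Fcompl_real : real_mx Fcompl.
Proof.
apply: real_mxB (real_mxM F_real (real_mxT F_real)).
by apply: real_scalar_mx; rewrite rmorphM !rmorph_nat.
Qed.

Definition sos_coef : C := (d - 8 / 3) / d.

Lemma g_sos : d != 0 -> g^T *m g = lam ^+ 2 *: 1%:M - sos_coef *: (Fcompl^T *m Fcompl).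
Proof.
move=> d_neq0; rewrite Fcompl_sym (complement_sq (FFt_sq)) g_sym /gmat.
rewrite (shift_sq (FFt_sq) _ d_neq0) /sos_coef.
by congr (_ *: _ - (_ / _) *: _); ring.
Qed.

Lemma Ft_g : F^T *m g = lam *: F^T.
Proof. by rewrite /gmat mulmxBr mulmxA FtF mul_scalar_mx mul_mx_scalar scalerBl. Qed.

End FMatrix.

Section ValueBounds.
Variable C : numClosedFieldType.
Variable k : nat.
Hypothesis k_ge3 : (3 <= k)%N.
Local Notation d := (2 * (k - 1)%:R : C).
Local Notation lam := (2 * (k - 1)%:R - 4 / 3 : C).
Local Notation F := (Fmat C k).
Local Notation g := (gmat C k).
Local Notation c := (sos_coef C k).

Lemma d_sub_ge0 : 0 <= d - 8 / 3.
Proof.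
have km1_ge2 : 2 <= (k - 1)%:R :> C by rewrite ler_nat; case: k k_ge3 => [|[|[|m]]].
have -> : d - 8 / 3 = 2 * ((k - 1)%:R - 2) + 4 / 3 by field.
by rewrite addr_ge0 ?mulr_ge0 ?invr_ge0 ?ler0n // subr_ge0.
Qed.

Lemma d_gt0 : 0 < d.
Proof.
have -> : d = (d - 8 / 3) + 8 / 3 by rewrite subrK.
by rewrite ltr_wpDl ?d_sub_ge0 // divr_gt0 ?ltr0n.
Qed.

Lemma d_neq0 : d != 0.
Proof. by rewrite gt_eqF // d_gt0. Qed.

Lemma lam_gt0 : 0 < lam.
Proof.
have -> : lam = (d - 8 / 3) + 4 / 3 by field.
by rewrite ltr_wpDl ?d_sub_ge0 // divr_gt0 ?ltr0n.
Qed.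

Lemma sos_coef_ge0 : 0 <= c.
Proof. by rewrite divr_ge0 ?d_sub_ge0 ?ltW ?d_gt0. Qed.

(* lam is a singular value: any row of F^T is an eigenvector of g^* g = g^2
   for lam^2. *)
Lemma singular_value_lam : singular_value g lam.
Proof.
split; first exact: ltW lam_gt0.
pose i0 : 'I_k := Ordinal (ltn_trans (isT : (0 < 2)%N) k_ge3).
apply/eigenvalueP; exists (row i0 F^T).
  rewrite adj_g mulmxA -row_mul Ft_g -row_mul -scalemxAl Ft_g scalerA -expr2.
  by apply/rowP => j; rewrite !mxE.
apply/eqP => /(congr1 (fun M => (M *m F) 0 i0)) /=.
rewrite -row_mul FtF mul0mx !mxE eqxx mulr1n => /eqP.
by rewrite (negPf d_neq0).
Qed.

(* Every singular value t is at most lam: for an eigenvector v of g^* g,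
   (lam^2 - t^2) |v|^2 = c |v M^T|^2 >= 0 by the sum-of-squares identity. *)
Lemma singular_value_le t : singular_value g t -> t <= lam.
Proof.
move=> [t_ge0 /eigenvalueP [v vE v_neq0]].
pose M := Fcompl C k.
have quad_sos : (v *m (g^T *m g) *m adj v) 0 0 =
    lam ^+ 2 * (v *m adj v) 0 0 - c * ((v *m M^T) *m adj (v *m M^T)) 0 0.
  rewrite (g_sos d_neq0) mulmxBr mulmxBl mxE [X in _ + X]mxE; congr (_ - _).
    by rewrite -scalemxAr -scalemxAl mulmx1 mxE.
  rewrite -scalemxAr -scalemxAl mxE adjM (adj_real (real_mxT (Fcompl_real C k))).
  by rewrite trmxK !mulmxA.
have quad_eigen : (v *m (g^T *m g) *m adj v) 0 0 = t ^+ 2 * (v *m adj v) 0 0.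
  by rewrite g_sym -{1}adj_g vE -scalemxAl mxE.
have : 0 <= (lam ^+ 2 - t ^+ 2) * (v *m adj v) 0 0.
  rewrite mulrBl -quad_eigen quad_sos opprB addrC subrK.
  exact: mulr_ge0 sos_coef_ge0 (rV_norm_ge0 _).
rewrite pmulr_lge0 ?rV_norm_gt0 // subr_ge0.
by rewrite (ler_sqr (x := t)) // nnegrE // ltW // lam_gt0.
Qed.

(* The upper bound: the bias is a cross sum of the rho-form between the
   families A1 x (x) 1 and 1 (x) A2 y, to which [sos_bias_bound] applies. *)
Lemma bias_le n1 n2 (rho : 'M[C]_(n1 * n2))
  (A1 : 'I_#|Fidx k| -> 'M[C]_n1) (A2 : 'I_#|Fidx k| -> 'M[C]_n2) :
  density rho -> (forall x, observable (A1 x)) -> (forall x, observable (A2 x)) ->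
  qbias g rho A1 A2 <= lam * (k * (k - 1))%:R.
Proof.
move=> rho_density obs1 obs2; have [_ [rho_psd _]] := rho_density.
rewrite -card_Fidx /qbias.
under eq_bigr => x _ do under eq_bigr => y _ do
  rewrite -(rdot_left_right rho _ (obs1 x).1).
apply: (sos_bias_bound rho_psd (g_real C k) (Fcompl_real C k)).
- exact: g_sos d_neq0.
- exact: lam_gt0.
- exact: sos_coef_ge0.
- by move=> x; apply: rdot_left.
- by move=> y; apply: rdot_right.
- move=> x y; rewrite rdot_right_left ?rdot_left_right //.
  + exact: (obs1 x).1.
  + exact: (obs2 y).1.
Qed.

End ValueBounds.

(* A hermitian involution is an observable: its eigenvalues square to 1. *)
Lemma involution_observable (C : numClosedFieldType) n (A : 'M[C]_n) :
  Defs.hermitian A -> A *m A = 1%:M -> observable A.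
Proof.
move=> hA AA; split=> // a /eigenvalueP [v vE v_neq0].
have : v = (a ^+ 2) *: v.
  have := congr1 (fun M => M *m A) vE.
  by rewrite /= -mulmxA AA mulmx1 -scalemxAl vE scalerA -expr2.
move/eqP; rewrite -subr_eq0 -{1}[v]scale1r -scalerBl scaler_eq0 (negPf v_neq0) orbF.
have m1_le1 : (-1 : C) <= 1 by rewrite -subr_ge0 opprK addr_ge0 ?ler01.
by rewrite subr_eq0 eq_sym sqrf_eq1 => /orP[] /eqP ->; rewrite ?lexx ?m1_le1.
Qed.

Section AnticommutingFamily.
Variable C : numClosedFieldType.
Variables (k D : nat) (gamma : 'I_k -> 'M[C]_D).
Hypothesis gamma_sq : forall c, gamma c *m gamma c = 1%:M.
Hypothesis gamma_anti : forall c c', c != c' -> gamma c *m gamma c' = - (gamma c' *m gamma c).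

Lemma anticommutator c c' :
  gamma c *m gamma c' + gamma c' *m gamma c = ((c == c')%:R * 2) *: 1%:M.
Proof.
have [<-|ne] := eqVneq c c'; first by rewrite gamma_sq mul1r scaler_nat mulr2n.
by rewrite gamma_anti // addNr mul0r scale0r.
Qed.

Lemma anticomm_comb_sq (f : 'I_k -> C) :
  (\sum_c f c *: gamma c) *m (\sum_c f c *: gamma c) = (\sum_c f c ^+ 2) *: 1%:M.
Proof.
set S := _ *m _.
have ES : S = \sum_c \sum_c' (f c * f c') *: (gamma c *m gamma c').
  rewrite /S mulmx_suml; apply: eq_bigr => c _.
  rewrite mulmx_sumr; apply: eq_bigr => c' _.
  by rewrite -scalemxAl -scalemxAr scalerA.
(* Symmetrizing, 2 S is the sum of the anticommutators. *)
apply: (@scalerI _ _ 2); first by rewrite pnatr_eq0.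
rewrite scaler_nat mulr2n {1}ES [X in _ + X]ES [X in _ + X]exchange_big -big_split /=.
transitivity ((\sum_c \sum_c' ((f c * f c') * ((c == c')%:R * 2))) *: (1%:M : 'M[C]_D)).
  rewrite scaler_suml; apply: eq_bigr => c _.
  rewrite scaler_suml -big_split; apply: eq_bigr => c' _ /=.
  by rewrite [f c' * f c]mulrC -scalerDr anticommutator scalerA.
rewrite scalerA; congr (_ *: _); rewrite mulr_sumr; apply: eq_bigr => c _.
rewrite (bigD1 c) //= eqxx big1 ?addr0 => [|c' ne]; first by rewrite expr2 mul1r mulrC.
by rewrite eq_sym (negPf ne) mul0r mulr0.
Qed.

(* Anticommutation makes distinct members trace-orthogonal. *)
Lemma mxtrace_anticomm c c' : \tr (gamma c *m gamma c') = (D * (c == c'))%:R.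
Proof.
have [<-|ne] := eqVneq c c'; first by rewrite gamma_sq mxtrace1 muln1.
rewrite muln0; apply/eqP.
have trN : \tr (gamma c *m gamma c') = - \tr (gamma c *m gamma c').
  by rewrite {1}gamma_anti // raddfN /= mxtrace_mulC.
by move/eqP: trN; rewrite -subr_eq0 opprK -mulr2n mulrn_eq0.
Qed.

End AnticommutingFamily.

(* Clifford matrices on C^({0,1}^k): gamma_i flips bit i and multiplies by
   the sign (-1)^(number of set bits below i) (the Jordan-Wigner
   construction). *)
Section Clifford.
Variable C : numClosedFieldType.
Variable k : nat.
Local Notation T := {ffun 'I_k -> bool}.
Local Notation D := #|{: T}|.

Definition bitflip (i : 'I_k) (s : T) : T := [ffun j => if j == i then ~~ s j else s j].

Definition jw_sign (i : 'I_k) (s : T) : C :=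
  \prod_(j < k | (j < i)%N) (if s j then -1 else 1).

Definition clifford (i : 'I_k) : 'M[C]_D :=
  \matrix_(r, c) (if enum_val c == bitflip i (enum_val r) then jw_sign i (enum_val r) else 0).

Lemma bitflipK i : involutive (bitflip i).
Proof. by move=> s; apply/ffunP => j; rewrite !ffunE; case: (j == i); rewrite ?negbK. Qed.

Lemma bitflipC i j s : bitflip j (bitflip i s) = bitflip i (bitflip j s).
Proof. by apply/ffunP => l; rewrite !ffunE; case: (l == i); case: (l == j). Qed.

Lemma jw_sign_flip l i s :
  jw_sign i (bitflip l s) = (if (l < i)%N then - jw_sign i s else jw_sign i s).
Proof.
rewrite /jw_sign; case: ifP => li.
  rewrite (bigD1 l) //= [in RHS](bigD1 l) //= !ffunE eqxx.
  rewrite (eq_bigr (fun j => if s j then -1 else 1)) => [|j /andP[_ /negPf jl]].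
    by case: (s l); rewrite /= ?mulN1r ?mul1r ?opprK.
  by rewrite ffunE jl.
apply: eq_bigr => j ji; rewrite ffunE.
by case: eqP => // E; rewrite -E ji in li.
Qed.

Lemma jw_sign_sq i s : jw_sign i s * jw_sign i s = 1.
Proof.
rewrite /jw_sign -big_split /=; apply: big1 => j _.
by case: (s j); rewrite ?mulrNN mulr1.
Qed.

Lemma jw_sign_real i s : (jw_sign i s)^* = jw_sign i s.
Proof.
rewrite /jw_sign rmorph_prod; apply: eq_bigr => j _.
by case: (s j); rewrite ?rmorphN rmorph1.
Qed.

Lemma sum_enum_val_eq (t : T) (h : T -> C) :
  \sum_(l < D) (if enum_val l == t then h (enum_val l) else 0) = h t.
Proof.
rewrite (bigD1 (enum_rank t)) //= enum_rankK eqxx big1 ?addr0 // => l ne.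
by case: eqP => // E; rewrite -E enum_valK eqxx in ne.
Qed.

Lemma clifford_mulE i j r c :
  (clifford i *m clifford j) r c =
  if enum_val c == bitflip j (bitflip i (enum_val r))
  then jw_sign i (enum_val r) * jw_sign j (bitflip i (enum_val r)) else 0.
Proof.
pose h u := jw_sign i (enum_val r) * (if enum_val c == bitflip j u then jw_sign j u else 0).
rewrite mxE; transitivity (\sum_(l < D)
    (if enum_val l == bitflip i (enum_val r) then h (enum_val l) else 0)).
  by apply: eq_bigr => l _; rewrite !mxE; case: eqP => [->|_] //=; rewrite mul0r.
by rewrite sum_enum_val_eq /h; case: ifP; rewrite ?mulr0.
Qed.

Lemma clifford_sq i : clifford i *m clifford i = 1%:M.
Proof.
apply/matrixP => r c; rewrite clifford_mulE bitflipK mxE jw_sign_flip ltnn jw_sign_sq.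
by rewrite (inj_eq enum_val_inj) eq_sym; case: (r == c).
Qed.

Lemma clifford_anti i j : i != j -> clifford i *m clifford j = - (clifford j *m clifford i).
Proof.
move=> ij; apply/matrixP => r c; rewrite [RHS]mxE !clifford_mulE bitflipC.
case: ifP => _; last by rewrite oppr0.
rewrite !jw_sign_flip; case: (ltngtP i j) => [_|_|eij]; try ring.
by move: ij; rewrite -val_eqE /= eij eqxx.
Qed.

Lemma clifford_sym i : (clifford i)^T = clifford i.
Proof.
apply/matrixP => r c; rewrite !mxE.
have -> : (enum_val r == bitflip i (enum_val c)) = (enum_val c == bitflip i (enum_val r)).
  by apply/eqP/eqP => ->; rewrite bitflipK.
by case: eqP => // ->; rewrite jw_sign_flip ltnn.
Qed.

Lemma clifford_real i : real_mx (clifford i).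
Proof. by apply/matrixP => r c; rewrite !mxE; case: ifP; rewrite ?jw_sign_real ?rmorph0. Qed.

Lemma adj_clifford i : adj (clifford i) = clifford i.
Proof. by rewrite adj_real ?clifford_sym //; exact: clifford_real. Qed.

End Clifford.

(* The attaining observables A_x = 2^(-1/2) sum_c F_xc gamma_c: the rows of F
   have squared norm 2, so each A_x is a hermitian involution. *)
Section CliffordObservables.
Variable C : numClosedFieldType.
Variable k : nat.
Local Notation D := #|{: {ffun 'I_k -> bool}}|.
Local Notation F := (Fmat C k).

Definition inv_sqrt2 : C := (sqrtC 2)^-1.

Lemma inv_sqrt2_real : inv_sqrt2^* = inv_sqrt2.
Proof. by rewrite conj_Creal // ger0_real // invr_ge0 sqrtC_ge0 ler0n. Qed.

Lemma inv_sqrt2_sq : inv_sqrt2 * inv_sqrt2 * 2 = 1.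
Proof. by rewrite /inv_sqrt2 -expr2 exprVn sqrtCK mulVf // pnatr_eq0. Qed.

Definition cliff_obs (x : 'I_#|Fidx k|) : 'M[C]_D :=
  inv_sqrt2 *: \sum_c F x c *: clifford C c.

Lemma cliff_obs_sq x : cliff_obs x *m cliff_obs x = 1%:M.
Proof.
rewrite /cliff_obs -scalemxAl -scalemxAr scalerA.
rewrite anticomm_comb_sq; [|exact: clifford_sq | exact: clifford_anti].
by rewrite F_row_norm scalerA inv_sqrt2_sq scale1r.
Qed.

Lemma adj_cliff_obs x : adj (cliff_obs x) = cliff_obs x.
Proof.
rewrite /cliff_obs adjZ inv_sqrt2_real adj_sum; congr (_ *: _).
by apply: eq_bigr => c _; rewrite adjZ adj_clifford (real_mxE (F_real C k)).
Qed.

Lemma cliff_obs_sym x : (cliff_obs x)^T = cliff_obs x.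
Proof.
rewrite /cliff_obs linearZ /= linear_sum; congr (_ *: _).
by apply: eq_bigr => c _; rewrite linearZ /= clifford_sym.
Qed.

Lemma cliff_obs_observable x : observable (cliff_obs x).
Proof. exact: involution_observable (adj_cliff_obs x) (cliff_obs_sq x). Qed.

(* Trace orthogonality of the gamma_c turns traces of products into entries of
   F F^T. *)
Lemma mxtrace_cliff_obs x y :
  \tr (cliff_obs x *m cliff_obs y) = inv_sqrt2 * inv_sqrt2 * (D%:R * (F *m F^T) x y).
Proof.
have -> : cliff_obs x *m cliff_obs y = (inv_sqrt2 * inv_sqrt2) *:
    \sum_c \sum_c' (F x c * F y c') *: (clifford C c *m clifford C c').
  rewrite /cliff_obs -scalemxAl -scalemxAr scalerA; congr (_ *: _).
  rewrite mulmx_suml; apply: eq_bigr => c _; rewrite mulmx_sumr.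
  by apply: eq_bigr => c' _; rewrite -scalemxAl -scalemxAr scalerA.
rewrite mxtraceZ; congr (_ * _).
rewrite raddf_sum mxE mulr_sumr; apply: eq_bigr => c _ /=; rewrite raddf_sum /=.
under eq_bigr => c' _ do rewrite mxtraceZ
  (mxtrace_anticomm (clifford_sq C (k:=k)) (@clifford_anti C k)) natrM mulrCA.
rewrite -mulr_sumr; congr (_ * _); rewrite [F^T _ _]mxE.
rewrite (bigD1 c) //= eqxx mulr1 big1 ?addr0 // => c' ne.
by rewrite eq_sym (negPf ne) mulr0.
Qed.

End CliffordObservables.

Section MaxEntangled.
Variable C : numClosedFieldType.
Variable n : nat.
Hypothesis n_gt0 : (0 < n)%N.

Definition ent_vec : 'cV[C]_(n * n) := \sum_(s < n) delta_mx (mxvec_index s s) 0.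

Lemma ent_vecE s t : ent_vec (mxvec_index s t) 0 = (s == t)%:R.
Proof.
rewrite summxE; under eq_bigr => u _ do rewrite mxE mxvec_index_eq eqxx andbT.
rewrite (bigD1 s) //= big1 ?addr0 => [|u /negPf us]; first by rewrite eqxx eq_sym.
by rewrite eq_sym us.
Qed.

Lemma ent_vec_real : real_mx ent_vec.
Proof.
apply/matrixP => p q; case/mxvec_indexP: p => s t.
by rewrite !mxE ord1 ent_vecE rmorph_nat.
Qed.

Lemma sum_ent_vec (h : 'I_(n * n) -> C) :
  \sum_p ent_vec p 0 * h p = \sum_(s < n) h (mxvec_index s s).
Proof.
rewrite sum_mxvec; apply: eq_bigr => s _.
rewrite (bigD1 s) //= big1 ?addr0 => [|t /negPf ts]; rewrite ent_vecE.
  by rewrite eqxx mul1r.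
by rewrite eq_sym ts mul0r.
Qed.

Definition ent_state : 'M[C]_(n * n) := (n%:R)^-1 *: (ent_vec *m ent_vec^T).

Lemma n_neq0 : (n%:R : C) != 0.
Proof. by rewrite pnatr_eq0 -lt0n. Qed.

Lemma ent_state_density : density ent_state.
Proof.
split; [|split].
- rewrite /Defs.hermitian /ent_state adjZ fmorphV rmorph_nat adjM.
  by rewrite (adj_real ent_vec_real) (adj_real (real_mxT ent_vec_real)) trmxK.
- move=> x; have -> : (adj x *m ent_state *m x) 0 0 =
      (n%:R)^-1 * (adj (ent_vec^T *m x) *m (ent_vec^T *m x)) 0 0.
    rewrite /ent_state -scalemxAr -scalemxAl mxE !mulmxA adjM.
    by rewrite (adj_real (real_mxT ent_vec_real)) trmxK.
  by rewrite mulr_ge0 ?invr_ge0 ?ler0n ?cV_norm_ge0.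
- rewrite /ent_state mxtraceZ mxtrace_mulC /mxtrace big_ord1 mxE.
  under eq_bigr => p _ do rewrite mxE mulrC.
  rewrite sum_ent_vec; under eq_bigr do rewrite ent_vecE eqxx.
  by rewrite sumr_const card_ord mulVf ?n_neq0.
Qed.

Lemma mxtrace_ent_state (A B : 'M[C]_n) :
  \tr (ent_state *m kron A B) = (n%:R)^-1 * \tr (A *m B^T).
Proof.
rewrite /ent_state -scalemxAl mxtraceZ -mulmxA mxtrace_mulC /mxtrace big_ord1.
congr (_ * _); set K := kron A B.
have -> : (ent_vec^T *m K *m ent_vec) 0 0 =
    \sum_p ent_vec p 0 * \sum_q ent_vec q 0 * K q p.
  rewrite mxE; apply: eq_bigr => p _; rewrite mxE mulrC; congr (_ * _).
  by apply: eq_bigr => q _; rewrite mxE.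
rewrite sum_ent_vec; under eq_bigr => s _ do rewrite sum_ent_vec.
rewrite exchange_big; apply: eq_bigr => i _; rewrite mxE.
by apply: eq_bigr => j _; rewrite /K kronE [B^T _ _]mxE.
Qed.

End MaxEntangled.

Lemma mxtrace_mulT (R : pzSemiRingType) n (X Y : 'M[R]_n) :
  \tr (X *m Y^T) = \sum_i \sum_j X i j * Y i j.
Proof. by apply: eq_bigr => i _; rewrite mxE; apply: eq_bigr => j _; rewrite mxE. Qed.

(* Attainment: with the Clifford observables on the maximally entangled
   state, the correlations are (F F^T)_xy / 2 and the bias is
   tr(g F F^T) / 2 = lam tr(F^T F) / 2 = lam k(k-1). *)
Section Attainment.
Variable C : numClosedFieldType.
Variable k : nat.
Local Notation D := #|{: {ffun 'I_k -> bool}}|.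
Local Notation F := (Fmat C k).
Local Notation g := (gmat C k).
Local Notation lam := (2 * (k - 1)%:R - 4 / 3 : C).
Local Notation A := (@cliff_obs C k).

Lemma D_gt0 : (0 < D)%N.
Proof. by rewrite card_ffun card_bool card_ord expn_gt0. Qed.

Lemma ent_correlation x y :
  \tr (ent_state C D *m kron (A x) (A y)) = inv_sqrt2 C * inv_sqrt2 C * (F *m F^T) x y.
Proof.
rewrite mxtrace_ent_state ?D_gt0 // cliff_obs_sym mxtrace_cliff_obs.
by field; exact: (n_neq0 C D_gt0).
Qed.

Lemma bias_attained : qbias g (ent_state C D) A A = lam * (k * (k - 1))%:R.
Proof.
rewrite /qbias; under eq_bigr => x _ do under eq_bigr => y _ do
  rewrite ent_correlation mulrCA.
transitivity (inv_sqrt2 C * inv_sqrt2 C * \tr (g *m (F *m F^T)^T)).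
  rewrite mxtrace_mulT mulr_sumr; apply: eq_bigr => x _.
  by rewrite mulr_sumr.
rewrite FFt_sym /gmat mulmxBl FFt_sq mul_scalar_mx -scalerBl mxtraceZ.
rewrite mxtrace_mulC FtF mxtrace_scalar -[_ *+ k]mulr_natr natrM.
transitivity (lam * (k%:R * (k - 1)%:R) * (inv_sqrt2 C * inv_sqrt2 C * 2)); first by ring.
by rewrite inv_sqrt2_sq mulr1.
Qed.

End Attainment.

Theorem mainTheorem13 (C : numClosedFieldType) (k : nat) (hk : (3 <= k)%N) :
  largest_singular_value (gmat C k) (2 * (k - 1)%:R - 4 / 3)
  /\ (forall (n1 n2 : nat) (rho : 'M[C]_(n1 * n2))
        (A1 : 'I_#|Fidx k| -> 'M[C]_n1) (A2 : 'I_#|Fidx k| -> 'M[C]_n2),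
        density rho -> (forall x, observable (A1 x)) ->
        (forall x, observable (A2 x)) ->
        qbias (gmat C k) rho A1 A2 <= (2 * (k - 1)%:R - 4 / 3) * (k * (k - 1))%:R)
  /\ (exists (n1 n2 : nat) (rho : 'M[C]_(n1 * n2))
        (A1 : 'I_#|Fidx k| -> 'M[C]_n1) (A2 : 'I_#|Fidx k| -> 'M[C]_n2),
        [/\ density rho, (forall x, observable (A1 x)),
            (forall x, observable (A2 x)) &
        qbias (gmat C k) rho A1 A2 = (2 * (k - 1)%:R - 4 / 3) * (k * (k - 1))%:R]).
Proof.
split; [split|split].
- exact: singular_value_lam.
- exact: singular_value_le.
- by move=> n1 n2 rho A1 A2; apply: bias_le.
- pose D := #|{: {ffun 'I_k -> bool}}|.
  exists D, D, (ent_state C D), (@cliff_obs C k), (@cliff_obs C k).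
  split; [exact: ent_state_density (D_gt0 k) | exact: cliff_obs_observable
    | exact: cliff_obs_observable | exact: bias_attained].
Qed.
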